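(* Fix $k$ and $\alpha>0$, and let $\beta\in(0,1)$. If $k>8/(1-\beta)$ and $n$ is sufficiently large, then with high probability over the random $k$-CNF formula $\Phi=\Phi(k,n,\lfloor\alpha n\rfloor)$ with clause set $\mathcal C_\Phi$, every subset $\mathcal C'\subseteq\mathcal C_\Phi$ with $2\le|\mathcal C'|\le2\log n$ contains at least two different clauses $c_1,c_2\in\mathcal C'$ such that for each $i\in\{1,2\}$, $$\Big|\mathrm{vbl}(c_i)\setminus\bigcup_{c'\in\mathcal C'\setminus\{c_i\}}\mathrm{vbl}(c')\Big|\ge\beta k.$$
   Context: The random $k$-CNF formula $\Phi(k,n,m)$ has variables $V=\{v_1,\dots,v_n\}$ and $m$ clauses generated independently, each a disjunction of $k$ literals, each literal chosen uniformly at random with replacement from the $2n$ literals $\{v_1,\dots,v_n,\neg v_1,\dots,\neg v_n\}$. $\mathrm{vbl}(c)$ is the set of (distinct) variables appearing in clause $c$. $\log$ denotes $\log_2$. *)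

From mathcomp Require Import all_boot.
From Stdlib Require Import Reals.

Set Implicit Arguments.
Unset Strict Implicit.
Unset Printing Implicit Defensive.

(* A literal over variables v_0..v_{n-1}: (variable, sign); true = positive.
   There are exactly 2n literals. *)
Definition literal (n : nat) := ('I_n * bool)%type.

(* A clause is an ordered k-tuple of literals (literals chosen with replacement). *)
Definition clause (k n : nat) := {ffun 'I_k -> literal n}.

Definition formula (k n m : nat) := {ffun 'I_m -> clause k n}.

Definition vbl (k n : nat) (c : clause k n) : {set 'I_n} :=
  [set (c j).1 | j : 'I_k].

Definition Rleb (x y : R) : bool := if Rle_dec x y then true else false.

Definition log2 (x : R) : R := (ln x / ln 2)%R.

Definition num_clauses (alpha : R) (n : nat) : nat :=
  Z.to_nat (Int_part (alpha * INR n)).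

(* The random formula
   Phi(k,n,m) (m independent clauses, each with k independent uniform
   literals) is exactly the uniform distribution on [formula k n m]. *)
Definition prob (T : finType) (P : pred T) : R :=
  (INR #|[set x | P x]| / INR #|T|)%R.

Definition unique_vars_property (k n m : nat) (beta : R) (F : formula k n m) : bool :=
  [forall S : {set 'I_m},
    ((2 <= #|S|)%N && Rleb (INR #|S|) (2 * log2 (INR n))%R) ==>
    [exists c1 : 'I_m, exists c2 : 'I_m,
      [&& c1 != c2, c1 \in S, c2 \in S,
          Rleb (beta * INR k)%R
               (INR #|vbl (F c1) :\: \bigcup_(c' in S :\ c1) vbl (F c')|)
        & Rleb (beta * INR k)%R
               (INR #|vbl (F c2) :\: \bigcup_(c' in S :\ c2) vbl (F c')|)]]].

(* If the property fails, some set S of s <= 2 log n clauses has at most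
   one clause with >= beta k private variables.  Double counting variable
   occurrences then shows that the clauses of S use at most s k - 2 s distinct
   variables, so 2 s of the s k literal positions of S repeat the variable of a
   first occurrence.  For fixed S and fixed such pairs of positions the
   coincidences have probability n^(-2s), and there are at most m^s (s k)^(4s)
   choices, so sets of size s fail with probability at most (m (s k)^4 / n^2)^s.
   With n = y^10 we have s <= 2 log2 n <= 40 y, so this ratio is at most
   alpha (40 k)^4 / y^6, and summing over s <= n leaves O(y^(-2)). *)

From Stdlib Require Import Reals Lra ZArith.
From mathcomp Require Import all_boot zify.

(* all_boot rebinds the %R delimiter, which the statement uses for Stdlib reals. *)
Delimit Scope R_scope with R.

Set Implicit Arguments.
Unset Strict Implicit.
Unset Printing Implicit Defensive.

Lemma leq_card_bigcup (I T : finType) (P : pred I) (A : I -> {set T}) :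
  #|\bigcup_(i | P i) A i| <= \sum_(i | P i) #|A i|.
Proof.
elim/big_rec2: _ => [|i n B _ IH]; first by rewrite cards0.
by apply: leq_trans (leq_card_setU _ _) _; rewrite leq_add2l.
Qed.

Lemma leq_double_card_bigcup (I T : finType) (S : {set I}) (A : I -> {set T}) :
  2 * #|\bigcup_(i in S) A i| <=
  \sum_(i in S) (#|A i| + #|A i :\: \bigcup_(j in S :\ i) A j|).
Proof.
have cardE (B : {set T}) : #|B| = \sum_x (x \in B).
  by rewrite -sum1_card big_mkcond; apply: eq_bigr => x _; case: (x \in B).
rewrite cardE big_distrr /=.
under [X in _ <= X]eq_bigr do rewrite !cardE -big_split /=.
rewrite exchange_big; apply: leq_sum => x _.
case: (boolP (x \in _)) => [/bigcupP [i iS xAi] | _]; last by rewrite muln0.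
rewrite (bigD1 i) //= !inE xAi.
case: (boolP (x \in \bigcup_(j in S :\ i) A j)) => [/bigcupP [j jS xAj] | _].
  move: jS; rewrite !inE => /andP [ji jS].
  by rewrite (bigD1 j) /= ?jS ?ji // xAj; lia.
by rewrite /= leq_addr.
Qed.

Lemma card_bigcup_few_private (I T : finType) (S : {set I}) (A : I -> {set T})
    (k d : nat) (i0 : I) :
  (forall i, #|A i| <= k) ->
  (forall i, i \in S -> i != i0 -> #|A i :\: \bigcup_(j in S :\ i) A j| + d <= k) ->
  2 * #|\bigcup_(i in S) A i| + d * #|S| <= 2 * (#|S| * k) + d.
Proof.
move=> Ak Uk; pose U i := A i :\: \bigcup_(j in S :\ i) A j.
have UA i : #|U i| <= #|A i| by apply/subset_leq_card/subsetDl.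
have sum_le : \sum_(i in S) (#|A i| + #|U i| + d) <= \sum_(i in S) (2 * k + d * (i == i0)).
  apply: leq_sum => i iS; have := Ak i; have := UA i; rewrite /U.
  by case: eqVneq => [_|/(Uk i iS)]; lia.
apply: leq_trans (leq_add (leq_double_card_bigcup S A) (leqnn _)) _.
rewrite [d * _]mulnC -[#|S| * d]sum_nat_const -big_split /=.
apply: leq_trans sum_le _; rewrite big_split /= sum_nat_const mulnCA leq_add2l.
rewrite -big_distrr /= -[X in _ <= X]muln1 leq_mul2l.
case: (boolP (i0 \in S)) => [i0S | i0S]; last first.
  by rewrite big1 ?orbT // => i iS; case: eqP iS => // ->; rewrite (negbTE i0S).
by rewrite (bigD1 i0) //= eqxx big1 ?orbT // => i /andP [_ /negbTE ->].
Qed.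

Section FirstOccurrence.
Variables (X Y : finType) (f : X -> Y) (P : {set X}).

Definition first_occurrence (x : X) : X :=
  [arg min_(y < x | (y \in P) && (f y == f x)) enum_rank y].

Lemma first_occurrenceP x : x \in P ->
  [/\ first_occurrence x \in P, f (first_occurrence x) = f x &
      forall y, y \in P -> f y = f x -> enum_rank (first_occurrence x) <= enum_rank y].
Proof.
move=> xP; rewrite /first_occurrence.
case: arg_minnP => [|y /andP [yP /eqP fy] ymin]; first by rewrite xP eqxx.
by split=> // z zP fz; apply: ymin; rewrite zP fz eqxx.
Qed.

Lemma card_first_occurrences : #|first_occurrence @: P| <= #|f @: P|.
Proof.
have inj : {in first_occurrence @: P &, injective f}.
  move=> _ _ /imsetP [x1 x1P ->] /imsetP [x2 x2P ->] f12.
  have [y1P fy1 min1] := first_occurrenceP x1P.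
  have [y2P fy2 min2] := first_occurrenceP x2P.
  apply/enum_rank_inj/val_inj/eqP; rewrite eqn_leq.
  by rewrite min1 ?min2 // -?fy1 -?fy2 ?f12.
rewrite -(card_in_imset inj); apply/subset_leq_card/subsetP => _ /imsetP [_ /imsetP [x xP ->] ->].
by have [_ -> _] := first_occurrenceP xP; apply: imset_f.
Qed.

Lemma collision_witnesses t : t + #|f @: P| <= #|P| ->
  exists p q : {ffun 'I_t -> X},
    [/\ p \in ffun_on P, q \in ffun_on P, injective q,
        [disjoint codom p & codom q] & forall l, f (p l) = f (q l)].
Proof.
move=> tP; have := card_first_occurrences; set F0 := first_occurrence @: P => F0f.
have tR : t <= #|P :\: F0|.
  have := cardsID F0 P; have : #|P :&: F0| <= #|F0| by apply/subset_leq_card/subsetIr.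
  lia.
(* q picks positions that are not first occurrences, p their first occurrences. *)
pose q := [ffun l => enum_val (widen_ord tR l) : X].
have qR l : q l \in P :\: F0 by rewrite ffunE; apply: enum_valP.
have qP l : q l \in P by have := qR l; rewrite inE => /andP [].
exists [ffun l => first_occurrence (q l)], q; split.
- by apply/ffun_onP => l; rewrite ffunE; case: (first_occurrenceP (qP l)).
- by apply/ffun_onP.
- move=> l1 l2; rewrite !ffunE => /enum_val_inj E.
  by apply/val_inj; have := congr1 val E.
- apply/pred0P => x /=; apply/negP => /andP [/codomP [l1 ->] /codomP [l2]].
  rewrite ffunE => E; have := qR l2; rewrite -E inE imset_f //.
- by move=> l; rewrite ffunE; case: (first_occurrenceP (qP l)).
Qed.

End FirstOccurrence.

Section CollisionCount.
Variables (I J Y B : finType) (t : nat) (p q : 'I_t -> I * J).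

Definition entry (F : {ffun I -> {ffun J -> Y * B}}) (x : I * J) : Y * B := F x.1 x.2.

Definition collision_set : {set {ffun I -> {ffun J -> Y * B}}} :=
  [set F | [forall l, (entry F (p l)).1 == (entry F (q l)).1]].

(* Overwriting the variables at the positions q l by an arbitrary word w is
   injective on collision_set x words: the overwritten variables are read off at
   the positions p l, which avoid codom q. *)
Lemma card_collision_set : injective q -> [disjoint codom p & codom q] ->
  #|collision_set| * #|Y| ^ t <= #|{ffun I -> {ffun J -> Y * B}}|.
Proof.
move=> q_inj pq_disj.
pose slot x := [pick l | q l == x].
have slot_q l : slot (q l) = Some l.
  by rewrite /slot; case: pickP => [l' /eqP /q_inj -> // | /(_ l)]; rewrite eqxx.
have slot_p l : slot (p l) = None.
  rewrite /slot; case: pickP => // l' /eqP qp.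
  by move/pred0P/(_ (p l)): pq_disj; rewrite /= codom_f -qp codom_f.
pose overwrite (F : {ffun I -> {ffun J -> Y * B}}) (w : {ffun 'I_t -> Y}) x :=
  if slot x is Some l then (w l, (entry F x).2) else entry F x.
pose code (Fw : _ * {ffun 'I_t -> Y}) : {ffun I -> {ffun J -> Y * B}} :=
  [ffun i => [ffun j => overwrite Fw.1 Fw.2 (i, j)]].
have code_entry Fw x : entry (code Fw) x = overwrite Fw.1 Fw.2 x.
  by rewrite /entry !ffunE -surjective_pairing.
have code_inj : {in setX collision_set setT &, injective code}.
  move=> [F w] [F' w']; rewrite !inE /= !andbT => /forallP eqF /forallP eqF' E.
  have {}E x : overwrite F w x = overwrite F' w' x.
    by have := congr1 (entry^~ x) E; rewrite !code_entry.
  have ww : w = w'.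
    by apply/ffunP => l; move: (E (q l)); rewrite /overwrite slot_q => -[].
  have FF x : entry F x = entry F' x.
    move: (E x); rewrite /overwrite; case Ex: (slot x) => [l|] // [_ e2].
    have xq : x = q l by move: Ex; rewrite /slot; case: pickP => // l' /eqP <- [<-].
    rewrite xq in e2 *; rewrite [entry F _]surjective_pairing [entry F' _]surjective_pairing e2.
    congr pair; move: (eqF l) (eqF' l) (E (p l)) => /eqP <- /eqP <-.
    by rewrite /overwrite slot_p => ->.
  by congr pair => //; apply/ffunP => i; apply/ffunP => j; apply: (FF (i, j)).
rewrite -[t]card_ord -card_ffun -cardsT -cardsX -(card_in_imset code_inj).
exact: max_card.
Qed.

End CollisionCount.

Arguments collision_set {I J Y B t} p q.
Arguments card_collision_set {I J} Y B {t p q}.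

Lemma leq_bin_exp (n k : nat) : 'C(n, k) <= n ^ k.
Proof.
apply: leq_trans (leq_pmulr _ (fact_gt0 k)) _.
rewrite bin_ffact ffact_prod -[X in n ^ X]card_ord -prod_nat_const.
by apply: leq_prod => i _; apply: leq_subr.
Qed.

Definition collision_event (k n m s : nat) : {set formula k n m} :=
  \bigcup_(S : {set 'I_m} | #|S| == s)
    \bigcup_(p in @ffun_on 'I_(2 * s) (setX S [set: 'I_k]))
      \bigcup_(q in @ffun_on 'I_(2 * s) (setX S [set: 'I_k]) |
               injectiveb q && [disjoint codom p & codom q])
        collision_set p q.

Lemma card_collision_event (k n m s : nat) :
  #|collision_event k n m s| * n ^ (2 * s) <=
  'C(m, s) * (s * k) ^ (4 * s) * #|{: formula k n m}|.
Proof.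
set N := #|{: formula k n m}|.
have cardF (S : {set 'I_m}) : #|S| = s ->
    #|@ffun_on 'I_(2 * s) (setX S [set: 'I_k])| = (s * k) ^ (2 * s).
  by move=> cS; rewrite card_ffun_on cardsX cardsT !card_ord cS.
apply: leq_trans (leq_mul (leq_card_bigcup _ _) (leqnn _)) _; rewrite big_distrl /=.
apply: (@leq_trans (\sum_(S : {set 'I_m} | #|S| == s) (s * k) ^ (4 * s) * N)).
  apply: leq_sum => S /eqP cS.
  apply: leq_trans (leq_mul (leq_card_bigcup _ _) (leqnn _)) _; rewrite big_distrl /=.
  have -> : (s * k) ^ (4 * s) * N =
      \sum_(p in @ffun_on 'I_(2 * s) (setX S [set: 'I_k])) ((s * k) ^ (2 * s) * N).
    by rewrite sum_nat_const cardF // mulnA -expnD; congr (_ ^ _ * _); lia.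
  apply: leq_sum => p _; apply: leq_trans (leq_mul (leq_card_bigcup _ _) (leqnn _)) _.
  rewrite big_distrl /= big_mkcondr /= -(cardF S cS) -sum_nat_const.
  apply: leq_sum => q _; case: ifP => // /andP [/injectiveP q_inj pq_disj].
  by have := card_collision_set 'I_n bool q_inj pq_disj; rewrite card_ord.
rewrite -mulnA -[m in 'C(m, _)]card_ord -card_draws -sum_nat_const.
by apply/eq_leq/eq_bigl => S; rewrite inE.
Qed.

Lemma RlebP (x y : R) : reflect (x <= y)%R (Rleb x y).
Proof. by rewrite /Rleb; case: Rle_dec => h; constructor. Qed.

Lemma add9_leq_of_lt_beta_mul (beta : R) (k u : nat) :
  (beta < 1)%R -> (8 / (1 - beta) < INR k)%R -> (INR u < beta * INR k)%R -> u + 9 <= k.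
Proof.
move=> b1 hk hu.
have h8 : (8 < INR k * (1 - beta))%R.
  have -> : (8 = 8 / (1 - beta) * (1 - beta))%R by field; lra.
  by apply: Rmult_lt_compat_r; lra.
have /INR_lt/ltP : (INR (u + 8) < INR k)%R by rewrite plus_INR; simpl INR; nra.
lia.
Qed.

Lemma failing_in_collision_event (k n m : nat) (beta : R) (F : formula k n m) :
  (beta < 1)%R -> (8 / (1 - beta) < INR k)%R -> ~~ unique_vars_property beta F ->
  exists S : {set 'I_m},
    [/\ 2 <= #|S|, (INR #|S| <= 2 * log2 (INR n))%R & F \in collision_event k n m #|S|].
Proof.
move=> b1 hk /forallPn [S]; rewrite negb_imply => /andP [/andP [S2 /RlebP SL] /existsPn noc].
exists S; split => //.
pose A c := vbl (F c).
pose U c := A c :\: \bigcup_(c' in S :\ c) A c'.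
have Ak c : #|A c| <= k by apply: leq_trans (leq_imset_card _ _) _; rewrite card_ord.
have bad c : Rleb (beta * INR k) (INR #|U c|) = false -> #|U c| + 9 <= k.
  by move/RlebP/Rnot_le_lt; apply: add9_leq_of_lt_beta_mul.
have [c0 Uc0] : exists c0, forall c, c \in S -> c != c0 -> #|U c| + 9 <= k.
  case: (pickP [pred c | (c \in S) && Rleb (beta * INR k) (INR #|U c|)]).
    move=> c0 /andP [c0S good0]; exists c0 => c cS cc0; apply: bad.
    by apply: negbTE; move: (noc c) => /existsPn /(_ c0); rewrite cc0 cS c0S good0 !andbT.
  have [c0 _] : exists c0, c0 \in S by apply/card_gt0P; lia.
  by move=> none; exists c0 => c cS _; apply: bad; move: (none c); rewrite /= cS.
have hV := card_bigcup_few_private Ak Uc0.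
pose f (x : 'I_m * 'I_k) := (F x.1 x.2).1.
have fV : #|f @: setX S [set: 'I_k]| <= #|\bigcup_(c in S) A c|.
  apply/subset_leq_card/subsetP => _ /imsetP [[c j] + ->]; rewrite inE => /andP [cS _].
  by apply/bigcupP; exists c => //; apply: imset_f.
have [|p [q [pP qP q_inj pq_disj fpq]]] :=
    @collision_witnesses _ _ f (setX S [set: 'I_k]) (2 * #|S|).
  (* 2 |V| + 9 |S| <= 2 |S| k + 9 and 2 <= |S| give |V| + 2 |S| <= |S| k. *)
  rewrite cardsX cardsT card_ord; move: S2 hV fV.
  set V := #|\bigcup_(c in S) A c|; set W := #|f @: _|; set s := #|S|.
  clearbody V W s; nia.
apply/bigcupP; exists S => //; apply/bigcupP; exists p => //; apply/bigcupP; exists q.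
  by rewrite qP pq_disj andbT; apply/injectiveP.
by rewrite inE; apply/forallP => l; apply/eqP; apply: fpq.
Qed.

Lemma INR_expn (a b : nat) : INR (a ^ b) = (INR a ^ b)%R.
Proof. by elim: b => [|b IH] //=; rewrite expnS mult_INR IH. Qed.

Lemma pow_le_sqr (r q : R) (s : nat) :
  (0 <= r <= q)%R -> (q <= 1)%R -> 2 <= s -> (r ^ s <= q ^ 2)%R.
Proof.
move=> rq q1 s2; apply: Rle_trans (pow_incr _ _ s rq) _.
rewrite -(subnKC s2) pow_add; have := pow_le q (s - 2).
have : (q ^ (s - 2) <= 1)%R by rewrite -(pow1 (s - 2)); apply: pow_incr; lra.
have := pow_le q 2; nra.
Qed.

Lemma INR_sum_le (N : nat) (P : pred nat) (g : nat -> nat) (X : R) :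
  (0 <= X)%R -> (forall i, P i -> INR (g i) <= X)%R ->
  (INR (\sum_(i < N | P i) g i) <= INR N * X)%R.
Proof.
move=> X0 gX; elim: N => [|N IH]; first by rewrite big_ord0 /=; lra.
rewrite big_mkcond big_ord_recr -big_mkcond plus_INR S_INR /=.
rewrite Rmult_plus_distr_r Rmult_1_l.
by case: ifP => [/gX|_] /=; apply: Rplus_le_compat.
Qed.

Definition root10 (x : R) : R := Rpower x (/ 10).

Lemma root10_gt0 (x : R) : (0 < root10 x)%R.
Proof. exact: exp_pos. Qed.

Lemma root10_pow (x : R) : (0 < x)%R -> (root10 x ^ 10 = x)%R.
Proof.
move=> x0; rewrite /root10 -Rpower_pow ?Rpower_mult; last exact: exp_pos.
by rewrite (_ : (/ 10 * INR 10 = 1)%R) ?Rpower_1 //; simpl INR; field.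
Qed.

Lemma two_log2_le_root10 (x : R) : (1 <= x)%R -> (2 * log2 x <= 40 * root10 x)%R.
Proof.
move=> x1; have l2 := ln_lt_2.
have l0 : (0 <= ln x)%R.
  rewrite -ln_1; case: (Req_dec x 1) => [-> | ne]; first lra.
  by apply/Rlt_le/ln_increasing; lra.
have : (/ 10 * ln x <= root10 x)%R.
  by have := exp_ineq1_le (/ 10 * ln x); rewrite /root10 /Rpower; lra.
have : (2 * log2 x <= 4 * ln x)%R.
  rewrite /log2; apply: (Rmult_le_reg_r (ln 2)); first lra.
  have -> : (2 * (ln x / ln 2) * ln 2 = 2 * ln x)%R by field; lra.
  nra.
lra.
Qed.

Lemma root10_unbounded (Y : R) : exists N : nat, forall n, N <= n -> (Y < root10 (INR n))%R.
Proof.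
have [N HN] := INR_unbounded (Rmax 1 Y ^ 10).
exists N => n /leP /le_INR nN.
have Y1 := Rmax_l 1 Y; have YY := Rmax_r 1 Y.
have Yp : (1 <= Rmax 1 Y ^ 10)%R by apply: pow_R1_Rle.
apply: Rle_lt_trans YY _; apply: Rnot_le_lt => le_root.
have : (root10 (INR n) ^ 10 <= Rmax 1 Y ^ 10)%R.
  by apply: pow_incr; have := root10_gt0 (INR n); lra.
rewrite root10_pow; lra.
Qed.

Lemma collision_event_le (k n m s : nat) : 0 < n ->
  (INR #|collision_event k n m s| <=
   INR #|{: formula k n m}| * (INR m * (INR s * INR k) ^ 4 / INR n ^ 2) ^ s)%R.
Proof.
move=> n0; have n0R : (0 < INR n)%R by apply/lt_0_INR/ltP.
have := leq_trans (card_collision_event k n m s)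
  (leq_mul (leq_mul (leq_bin_exp m s) (leqnn _)) (leqnn _)).
move/leP/le_INR; rewrite !mult_INR !INR_expn !mult_INR.
set r := (INR m * _ / _)%R; set X := INR #|_|; set N := INR #|_|.
have nA : (0 < INR n ^ (2 * s))%R by apply: pow_lt.
have -> : (INR m ^ s * (INR s * INR k) ^ (4 * s) = r ^ s * INR n ^ (2 * s))%R.
  by rewrite !pow_mult -!Rpow_mult_distr; congr pow; rewrite /r; field; lra.
move=> H; apply: (Rmult_le_reg_r (INR n ^ (2 * s))) => //; lra.
Qed.

Lemma collision_ratio_le (alpha : R) (k m n s : nat) :
  (0 <= alpha)%R -> (0 < INR n)%R -> (INR m <= alpha * INR n)%R ->
  (INR s <= 40 * root10 (INR n))%R ->
  (INR m * (INR s * INR k) ^ 4 / INR n ^ 2 <= alpha * (40 * INR k) ^ 4 / root10 (INR n) ^ 6)%R.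
Proof.
move=> a0 n0 hm hs; have y0 := root10_gt0 (INR n); have hy := root10_pow n0.
set y := root10 (INR n) in y0 hy hs *.
have k0 := pos_INR k; have s0 := pos_INR s; have m0 := pos_INR m.
apply: (@Rle_trans _ (alpha * INR n * (40 * y * INR k) ^ 4 / INR n ^ 2)).
  apply: Rmult_le_compat_r; first by apply/Rlt_le/Rinv_0_lt_compat/pow_lt.
  apply: Rmult_le_compat => //; first by apply: pow_le; nra.
  by apply: pow_incr; nra.
by apply: Req_le; rewrite -hy; field; lra.
Qed.

Lemma card_failing_le (k n m : nat) (alpha beta : R) :
  0 < n -> (0 <= alpha)%R -> (beta < 1)%R -> (8 / (1 - beta) < INR k)%R ->
  (INR m <= alpha * INR n)%R -> (40 <= root10 (INR n))%R ->
  (alpha * (40 * INR k) ^ 4 <= root10 (INR n) ^ 6)%R ->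
  (INR #|[set F : formula k n m | ~~ unique_vars_property beta F]| <=
   INR n.+1 * (INR #|{: formula k n m}| * (alpha * (40 * INR k) ^ 4 / root10 (INR n) ^ 6) ^ 2))%R.
Proof.
move=> n0 a0 b1 hk hm y40 hc; have n1 : (1 <= INR n)%R by apply: (le_INR 1); apply/leP.
have hy := root10_pow (Rlt_le_trans _ _ _ Rlt_0_1 n1); have log_y := two_log2_le_root10 n1.
set y := root10 (INR n) in y40 hc hy log_y *.
have k0 := pos_INR k; have y6 : (0 < y ^ 6)%R by apply: pow_lt; lra.
have Q0 : (0 <= alpha * (40 * INR k) ^ 4 / y ^ 6)%R.
  apply: Rmult_le_pos; last by apply/Rlt_le/Rinv_0_lt_compat.
  by apply: Rmult_le_pos => //; apply: pow_le; lra.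
have Q1 : (alpha * (40 * INR k) ^ 4 / y ^ 6 <= 1)%R.
  by apply: (Rmult_le_reg_r (y ^ 6)) => //; rewrite /Rdiv Rmult_assoc Rinv_l; lra.
have yn : (40 * y <= INR n)%R.
  rewrite -hy; have := Rle_pow y 2 10 (ltac:(lra)) (ltac:(lia)); simpl pow; nra.
pose small (s : nat) := (2 <= s) && Rleb (INR s) (40 * y).
have sub : [set F | ~~ unique_vars_property beta F] \subset
           \bigcup_(s < n.+1 | small s) collision_event k n m s.
  apply/subsetP => F; rewrite inE => /(failing_in_collision_event b1 hk) [S [S2 SL FS]].
  have Sy : (INR #|S| <= 40 * y)%R by lra.
  have ltS : #|S| < n.+1 by apply/ltP/INR_lt; rewrite S_INR; lra.
  by apply/bigcupP; exists (Ordinal ltS) => //; rewrite /small S2; apply/RlebP.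
apply: (Rle_trans _ (INR (\sum_(s < n.+1 | small s) #|collision_event k n m s|))).
  by apply/le_INR/leP; apply: leq_trans (subset_leq_card sub) (leq_card_bigcup _ _).
apply: (@INR_sum_le n.+1 small (fun s => #|collision_event k n m s|)).
  by apply: Rmult_le_pos; [apply: pos_INR | apply: pow_le].
move=> s /andP [s2 /RlebP sy].
apply: Rle_trans (collision_event_le k m s n0) _.
apply: Rmult_le_compat_l; first exact: pos_INR.
apply: pow_le_sqr => //; split; last by apply: collision_ratio_le => //; lra.
apply: Rmult_le_pos.
  by apply: Rmult_le_pos; [apply: pos_INR | apply: pow_le; have := pos_INR s; nra].
by apply/Rlt_le/Rinv_0_lt_compat/pow_lt; lra.
Qed.

Lemma root10_tail_le (c eps : R) (n : nat) :
  0 < n -> (0 < eps)%R -> (1 <= root10 (INR n))%R -> (2 * c ^ 2 / eps < root10 (INR n))%R ->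
  (INR n.+1 * (c / root10 (INR n) ^ 6) ^ 2 <= eps)%R.
Proof.
move=> n0 e0 y1 yc; have n1 : (1 <= INR n)%R by apply: (le_INR 1); apply/leP.
have hy := root10_pow (Rlt_le_trans _ _ _ Rlt_0_1 n1).
set y := root10 (INR n) in y1 yc hy *.
have y12 : (0 < y ^ 12)%R by apply: pow_lt; lra.
have -> : ((c / y ^ 6) ^ 2 = c ^ 2 / y ^ 12)%R by field; lra.
have c2 : (2 * c ^ 2 < eps * y)%R.
  rewrite {1}(_ : (2 * c ^ 2 = 2 * c ^ 2 / eps * eps)%R); [nra | field; lra].
have yy : (y <= y ^ 2)%R by have := Rle_pow y 1 2 y1 (ltac:(lia)); rewrite pow_1.
rewrite S_INR -hy; apply: (Rmult_le_reg_r (y ^ 12)) => //.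
rewrite Rmult_assoc /Rdiv Rmult_assoc Rinv_l; last lra.
have -> : (y ^ 12 = y ^ 10 * y ^ 2)%R by rewrite -pow_add.
have y10 : (1 <= y ^ 10)%R by apply: pow_R1_Rle.
have cc := pow2_ge_0 c; have y10p : (0 <= y ^ 10)%R by lra.
have h1 : ((y ^ 10 + 1) * c ^ 2 <= y ^ 10 * (2 * c ^ 2))%R by nra.
have h2 : (y ^ 10 * (2 * c ^ 2) <= y ^ 10 * (eps * y ^ 2))%R.
  by apply: Rmult_le_compat_l => //; nra.
lra.
Qed.

Lemma prob_ge_of_card_compl_le (T : finType) (P : pred T) (eps : R) : 0 < #|T| ->
  (INR #|[set x | ~~ P x]| <= eps * INR #|T|)%R -> (1 - eps <= prob P)%R.
Proof.
move=> T0 h; have TR : (0 < INR #|T|)%R by apply/lt_0_INR/ltP.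
have : #|[set x | P x]| + #|[set x | ~~ P x]| = #|T|.
  by rewrite -(cardsC [set x | P x]); congr (_ + _); apply: eq_card => x; rewrite !inE.
move/(congr1 INR); rewrite plus_INR => e.
rewrite /prob; apply: (Rmult_le_reg_r (INR #|T|)) => //.
rewrite /Rdiv Rmult_assoc Rinv_l; lra.
Qed.

Lemma num_clauses_le (alpha : R) (n : nat) :
  (0 < alpha)%R -> (INR (num_clauses alpha n) <= alpha * INR n)%R.
Proof.
move=> a0; rewrite /num_clauses; have [h1 _] := base_Int_part (alpha * INR n).
case: (Z_le_gt_dec 0 (Int_part (alpha * INR n))) => hz.
  by rewrite INR_IZR_INZ Z2Nat.id.
rewrite (_ : Z.to_nat _ = 0) /=; last by lia.
by have := pos_INR n; nra.
Qed.

Theorem lemma4p14 (k : nat) (alpha beta : R) :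
  (0 < alpha)%R -> (0 < beta)%R -> (beta < 1)%R ->
  (8 / (1 - beta) < INR k)%R ->
  forall eps : R, (0 < eps)%R ->
  exists N : nat, forall n : nat, (N <= n)%N ->
    (1 - eps <= prob (@unique_vars_property k n (num_clauses alpha n) beta))%R.
Proof.
move=> a0 _ b1 hk eps e0.
set c := (alpha * (40 * INR k) ^ 4)%R.
have c0 : (0 <= c)%R by apply: Rmult_le_pos; [lra | apply: pow_le; have := pos_INR k; lra].
have c2 : (0 <= 2 * c ^ 2 / eps)%R.
  by apply: Rmult_le_pos; [have := pow2_ge_0 c; lra | apply/Rlt_le/Rinv_0_lt_compat].
have [N HN] := root10_unbounded (40 + c + 2 * c ^ 2 / eps).
exists N.+1 => n Nn; have n0 : 0 < n by apply: leq_ltn_trans Nn.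
have /HN y_large := ltnW Nn.
have y6 : (root10 (INR n) <= root10 (INR n) ^ 6)%R.
  by have := Rle_pow (root10 (INR n)) 1 6 (ltac:(lra)) (ltac:(lia)); rewrite pow_1.
apply: prob_ge_of_card_compl_le.
  by apply/card_gt0P; exists [ffun _ => [ffun _ => (Ordinal n0, true)]].
have := @card_failing_le k n (num_clauses alpha n) alpha beta n0 (Rlt_le _ _ a0) b1 hk
  (num_clauses_le n a0); rewrite -/c => /(_ ltac:(lra) ltac:(lra)) bad.
have tail := @root10_tail_le c eps n n0 e0 ltac:(lra) ltac:(lra).
apply: Rle_trans bad _; rewrite (Rmult_comm (INR #|_|)) -Rmult_assoc.
by apply: Rmult_le_compat_r; first exact: pos_INR.
Qed.
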